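(* Consider the $\mathrm{AND}$ instance with $n$ variables: $f(x)=\bigwedge_{i=1}^n x_i$, the input $x$ uniform on $\{0,1\}^n$, and costs $(c_1,\dots,c_n)$ a uniformly random permutation of $\{1,\dots,n\}$. Then the offline benchmark satisfies $\mathrm{opt}^{\mathrm{avg}}_0=O(1)$, while every zero-error online algorithm has expected cost $\Omega(n)$ on this instance.
   Context: Online priced query model: $f$ is given; the input and the costs are unknown; the algorithm maintains investments $\theta$ (initially $0$), each step increasing one coordinate by a positive amount; $x_i$ is revealed once $\theta_i\ge c_i$; cost is $\|\theta\|_1$ at halting. Offline algorithms know the costs and pay $c_i$ to reveal $x_i$. Zero-error means the output always equals $f(x)$. Expected costs (and $\mathrm{opt}^{\mathrm{avg}}_0$, the optimal expected cost of a zero-error offline algorithm) are taken over the random input, the random costs, and the algorithm's randomness; the implied constants are absolute. *)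

From HB Require Import structures.
From mathcomp Require Import all_boot all_order all_algebra all_fingroup.
From mathcomp Require Import all_classical all_reals all_analysis.
Set Implicit Arguments. Unset Strict Implicit. Unset Printing Implicit Defensive.
Import Order.TTheory GRing.Theory Num.Theory.
Local Open Scope ring_scope.

Definition input (n : nat) := {ffun 'I_n -> bool}.
Definition obs (n : nat) := {ffun 'I_n -> option bool}.

Definition AND (n : nat) (x : input n) : bool := [forall i, x i].

(** Costs (c_1,...,c_n) given by a permutation s of {1..n}: c_i = s(i)+1
    (ordinals are 0-based). *)
Definition perm_costs (R : realType) (n : nat) (s : {perm 'I_n}) : 'I_n -> R :=
  fun i => ((s i : nat).+1)%:R.

Definition avg_xs (R : realType) (n : nat) (F : input n -> {perm 'I_n} -> R) : R :=
  (\sum_(x : input n) \sum_(s : {perm 'I_n}) F x s)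
    / (#|{: input n}| * #|{: {perm 'I_n}}|)%:R.

(** A (deterministic) online algorithm sees the whole history of observations
    (revealed values after each step) and either halts with an output or
    increases the investment of one coordinate by an amount d (which must be
    positive; a non-positive step is an invalid move and makes the run fail). *)
Inductive online_action (R : Type) (n : nat) :=
| OnHalt of bool
| OnInvest of 'I_n & R.

Definition online_alg (R : realType) (n : nat) := seq (obs n) -> online_action R n.

Definition revealed (R : realType) (n : nat) (x : input n) (c : 'I_n -> R)
  (th : {ffun 'I_n -> R}) : obs n :=
  [ffun i => if c i <= th i then Some (x i) else None].

Fixpoint online_run (R : realType) (n : nat) (A : online_alg R n) (x : input n)
  (c : 'I_n -> R) (k : nat) (th : {ffun 'I_n -> R}) (h : seq (obs n))
  : option (bool * R) :=
  match k with
  | 0 => None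
  | k'.+1 =>
    match A h with
    | OnHalt b => Some (b, \sum_i th i)
    | OnInvest i d =>
      if 0 < d then
        let th' : {ffun 'I_n -> R} :=
          [ffun j => if j == i then th j + d else th j] in
        online_run A x c k' th' (rcons h (revealed x c th'))
      else None
    end
  end.

Definition online_outcome (R : realType) (n : nat) (A : online_alg R n)
  (x : input n) (c : 'I_n -> R) (k : nat) : option (bool * R) :=
  online_run A x c k [ffun => 0] [:: revealed x c [ffun => 0]].

Definition online_zero_error (R : realType) (n : nat) (A : online_alg R n) : Prop :=
  forall (x : input n) (s : {perm 'I_n}),
    exists k v, online_outcome A x (perm_costs R s) k = Some (AND x, v).

(** Cost ||theta||_1 at halting (the run is deterministic, so this is the
    unique such value when the algorithm halts). *)
Definition online_cost (R : realType) (n : nat) (A : online_alg R n)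
  (x : input n) (c : 'I_n -> R) : R :=
  xget 0 [set v | exists k b, online_outcome A x c k = Some (b, v)].

Definition online_avg_cost (R : realType) (n : nat) (A : online_alg R n) : R :=
  avg_xs (fun x s => online_cost A x (perm_costs R s)).

Inductive offline_action (n : nat) :=
| OffHalt of bool
| OffQuery of 'I_n.

Definition offline_alg (R : realType) (n : nat) :=
  ('I_n -> R) -> seq (obs n) -> offline_action n.

Fixpoint offline_run (R : realType) (n : nat) (A : offline_alg R n) (x : input n)
  (c : 'I_n -> R) (k : nat) (rev : obs n) (spent : R) (h : seq (obs n))
  : option (bool * R) :=
  match k with
  | 0 => None
  | k'.+1 =>
    match A c h with
    | OffHalt b => Some (b, spent)
    | OffQuery i =>
      let rev' : obs n := [ffun j => if j == i then Some (x j) else rev j] in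
      offline_run A x c k' rev' (spent + c i) (rcons h rev')
    end
  end.

Definition offline_outcome (R : realType) (n : nat) (A : offline_alg R n)
  (x : input n) (c : 'I_n -> R) (k : nat) : option (bool * R) :=
  offline_run A x c k [ffun => None] 0 [:: [ffun => None]].

Definition offline_zero_error (R : realType) (n : nat) (A : offline_alg R n) : Prop :=
  forall (x : input n) (s : {perm 'I_n}),
    exists k v, offline_outcome A x (perm_costs R s) k = Some (AND x, v).

Definition offline_cost (R : realType) (n : nat) (A : offline_alg R n)
  (x : input n) (c : 'I_n -> R) : R :=
  xget 0 [set v | exists k b, offline_outcome A x c k = Some (b, v)].

Definition offline_avg_cost (R : realType) (n : nat) (A : offline_alg R n) : R :=
  avg_xs (fun x s => offline_cost A x (perm_costs R s)).

(* Offline, querying the variables by increasing cost and stopping at the first 0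
   pays the (j+1)-th cost j+1 only when the j cheapest variables are all 1, which
   happens with probability 2^-j; so the expected cost is at most
   sum_j (j+1) 2^-j <= 4.
   Online, a deterministic algorithm follows the same investment trajectory on
   every input and every cost vector for as long as nothing is revealed. Fix x and
   some x' with AND x' <> AND x: a zero-error run on x halting with cost below n/2
   must therefore have revealed a variable along the part of the trajectory of
   total investment at most n/2, and by a union bound a uniformly random cost
   permutation lets this happen with probability at most 1/2. Hence every input
   costs at least n/4 on average over the costs, and integrating over the
   algorithm's randomness gives the same bound for randomized algorithms. *)

From HB Require Import structures.
From mathcomp Require Import all_boot all_order all_algebra all_fingroup.
From mathcomp Require Import all_classical all_reals all_analysis.
From mathcomp Require Import measurable_realfun.
From mathcomp Require Import zify ring.
Set Implicit Arguments. Unset Strict Implicit. Unset Printing Implicit Defensive.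
Import Order.TTheory GRing.Theory Num.Theory.
Local Open Scope ring_scope.

Section Runs.
Variables (R : realType) (n : nat).

Lemma online_run_monotone (A : online_alg R n) x c k k' th h r :
  (k <= k')%N -> online_run A x c k th h = Some r -> online_run A x c k' th h = Some r.
Proof.
elim: k k' th h => [//|k IH] [//|k'] th h /=; rewrite ltnS => le_kk'.
by case: (A h) => // i d; case: ifP => // _; apply: IH.
Qed.

Lemma online_run_ge_sum (A : online_alg R n) x c k th h b v :
  online_run A x c k th h = Some (b, v) -> \sum_i th i <= v.
Proof.
elim: k th h => [//|k IH] th h /=.
case: (A h) => [_ [_ <-] //| i d]; case: ifP => // d_gt0 /IH.
apply: le_trans; apply: ler_sum => j _; rewrite ffunE.
by case: eqP => // _; rewrite lerDl ltW.
Qed.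

Lemma online_costE (A : online_alg R n) x c k b v :
  online_outcome A x c k = Some (b, v) -> online_cost A x c = v.
Proof.
move=> out; apply: xget_unique; first by exists k, b.
move=> w [k' [b' out']].
have := online_run_monotone (leq_maxl k k') out.
by rewrite (online_run_monotone (leq_maxr k k') out') => -[].
Qed.

Lemma offline_run_monotone (A : offline_alg R n) x c k k' rv sp h r :
  (k <= k')%N -> offline_run A x c k rv sp h = Some r ->
  offline_run A x c k' rv sp h = Some r.
Proof.
elim: k k' rv sp h => [//|k IH] [//|k'] rv sp h /=; rewrite ltnS => le_kk'.
by case: (A c h) => // i; apply: IH.
Qed.

Lemma offline_costE (A : offline_alg R n) x c k b v :
  offline_outcome A x c k = Some (b, v) -> offline_cost A x c = v.
Proof.
move=> out; apply: xget_unique; first by exists k, b.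
move=> w [k' [b' out']].
have := offline_run_monotone (leq_maxl k k') out.
by rewrite (offline_run_monotone (leq_maxr k k') out') => -[].
Qed.

End Runs.

Section Averages.
Variables (R : realType) (n : nat).

Lemma card_input : #|{: input n}| = (2 ^ n)%N.
Proof. by rewrite card_ffun card_bool card_ord. Qed.

Let avg_denom_gt0 : 0 < (#|{: input n}| * #|{: {perm 'I_n}}|)%:R :> R.
Proof. by rewrite ltr0n muln_gt0 card_input expn_gt0 /=; apply/card_gt0P; exists 1%g. Qed.

Lemma avg_xs_le (F : input n -> {perm 'I_n} -> R) (C : R) :
  (forall s, \sum_x F x s <= C * #|{: input n}|%:R) -> avg_xs F <= C.
Proof.
move=> le_FC; rewrite /avg_xs ler_pdivrMr // exchange_big /=.
apply: le_trans (ler_sum _ (fun s _ => le_FC s)) _.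
by rewrite sumr_const -[_ *+ #|_|]mulr_natr natrM mulrA cardT -cardE.
Qed.

Lemma avg_xs_ge (F : input n -> {perm 'I_n} -> R) (C : R) :
  (forall x, C * #|{: {perm 'I_n}}|%:R <= \sum_s F x s) -> C <= avg_xs F.
Proof.
move=> le_CF; rewrite /avg_xs ler_pdivlMr //.
apply: le_trans (ler_sum _ (fun x _ => le_CF x)).
by rewrite sumr_const -[_ *+ #|_|]mulr_natr natrM mulrA cardT -cardE mulrAC.
Qed.

End Averages.

Lemma card_ord_ltn n m : #|[set k : 'I_n | (k < m)%N]| = minn m n.
Proof.
have -> : [set k : 'I_n | (k < m)%N] = widen_ord (geq_minr m n) @: 'I_(minn m n).
  apply/setP => k; rewrite inE; apply/idP/imsetP => [k_lt_m|[k' _ ->]].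
    have k_lt_min : (k < minn m n)%N by rewrite ltn_min k_lt_m ltn_ord.
    by exists (Ordinal k_lt_min) => //; apply: val_inj.
  by rewrite /= (leq_trans (ltn_ord k')) ?geq_minl.
by rewrite card_imset ?card_ord // => a b [] /val_inj.
Qed.

Lemma card_ord_natr_le (R : realType) n (t : R) :
  0 <= t -> #|[set k : 'I_n | k.+1%:R <= t]|%:R <= t.
Proof.
move=> t_ge0; have -> : [set k : 'I_n | k.+1%:R <= t] = [set k : 'I_n | (k < Num.truncn t)%N].
  by apply/setP => k; rewrite !inE truncn_gt_nat.
rewrite card_ord_ltn; apply: le_trans (_ : (Num.truncn t)%:R <= t).
  by rewrite ler_nat geq_minl.
by rewrite truncn_le.
Qed.

Lemma card_perm_at (T : finType) (i k k' : T) :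
  #|[set s : {perm T} | s i == k]| = #|[set s : {perm T} | s i == k']|.
Proof.
suff le_card a b : (#|[set s : {perm T} | s i == a]| <= #|[set s : {perm T} | s i == b]|)%N.
  by apply/eqP; rewrite eqn_leq !le_card.
rewrite -(card_imset _ (mulIg (tperm a b))); apply: subset_leq_card.
apply/fintype.subsetP => t /imsetP [s]; rewrite inE => /eqP s_i ->.
by rewrite inE permM s_i tpermL.
Qed.

Lemma card_perm_preim (T : finType) (i : T) (P : pred T) :
  (#|[set s : {perm T} | P (s i)]| * #|T| = #|[set k | P k]| * #|{: {perm T}}|)%N.
Proof.
have fibers Q : #|[set s : {perm T} | Q (s i)]| =
    (#|[set k | Q k]| * #|[set s : {perm T} | s i == i]|)%N.
  rewrite -[LHS]sum1dep_card (partition_big (fun s : {perm T} => s i) Q) //=.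
  rewrite -sum_nat_const [RHS](eq_bigl Q) => [|k]; last by rewrite inE.
  apply: eq_bigr => k Qk; rewrite (card_perm_at i i k) -sum1dep_card.
  by apply: eq_bigl => s; case: eqP => [->|]; rewrite ?Qk ?andbF.
have -> : #|{: {perm T}}| = #|[set s : {perm T} | predT (s i)]|.
  by apply: eq_card => s; rewrite inE.
by rewrite !fibers cardsT -mulnA (mulnC #|T|).
Qed.

Lemma card_exists_le (T I : finType) (P : I -> pred T) :
  (#|[set s | [exists i, P i s]]| <= \sum_i #|[set s | P i s]|)%N.
Proof.
rewrite -sum1dep_card big_mkcond /=.
under [X in (_ <= X)%N]eq_bigr => i _ do rewrite -sum1dep_card big_mkcond /=.
rewrite exchange_big /=; apply: leq_sum => s _.
by case: ifP => // /existsP [i Pi]; rewrite (bigD1 i) //= Pi.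
Qed.

Section OnlineLowerBound.
Variables (R : realType) (n : nat).

Definition revealing (th : 'I_n -> R) : {set {perm 'I_n}} :=
  [set s | [exists i, perm_costs R s i <= th i]].

Lemma revealing_monotone (th th' : 'I_n -> R) :
  (forall i, th i <= th' i) -> revealing th \subset revealing th'.
Proof.
move=> le_th; apply/fintype.subsetP => s; rewrite !inE => /existsP [i le_ci].
by apply/existsP; exists i; apply: le_trans (le_th i).
Qed.

Lemma revealed_none x s (th : {ffun 'I_n -> R}) :
  s \notin revealing th -> revealed x (perm_costs R s) th = [ffun => None].
Proof.
rewrite inE negb_exists => /forallP unrev; apply/ffunP => i.
by rewrite !ffunE (negbTE (unrev i)).
Qed.

Lemma notin_revealing0 s : s \notin revealing [ffun => 0].
Proof.
by rewrite inE negb_exists; apply/forallP => i; rewrite ffunE /perm_costs -ltNge ltr0Sn.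
Qed.

Lemma online_outcome_perm_costs (A : online_alg R n) x s k :
  online_outcome A x (perm_costs R s) k =
  online_run A x (perm_costs R s) k [ffun => 0] [:: [ffun => None]].
Proof. by rewrite /online_outcome revealed_none ?notin_revealing0. Qed.

(* Union bound: [s] reveals [x_i] with probability [#|{k | k + 1 <= th i}| / n <= th i / n]. *)
Lemma card_revealing_le (th : 'I_n -> R) : (0 < n)%N -> (forall i, 0 <= th i) ->
  #|revealing th|%:R <= #|{: {perm 'I_n}}|%:R / n%:R * \sum_i th i.
Proof.
move=> n_gt0 th_ge0.
apply: (@le_trans _ _ (\sum_i #|[set s : {perm 'I_n} | (perm_costs R s i <= th i)%R]|)%N%:R).
  by rewrite ler_nat card_exists_le.
rewrite natr_sum mulr_sumr; apply: ler_sum => i _.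
have := card_perm_preim i (fun k : 'I_n => k.+1%:R <= th i).
move=> /(congr1 (fun m => m%:R : R)); rewrite !natrM card_ord => /(canRL (mulfK _)).
rewrite pnatr_eq0 -lt0n => /(_ n_gt0) ->.
rewrite [X in _ <= X]mulrC !mulrA.
by do 2 apply: ler_wpM2r => //; apply: card_ord_natr_le.
Qed.

Lemma exists_AND_neq (x : input n) : (0 < n)%N -> exists x' : input n, AND x' != AND x.
Proof.
move=> n_gt0; exists [ffun => ~~ AND x].
have AND_cst b : AND ([ffun => b] : input n) = b.
  case: b; first by apply/forallP => i; rewrite ffunE.
  by apply/negbTE/forallPn; exists (Ordinal n_gt0); rewrite ffunE.
by rewrite AND_cst; case: (AND x).
Qed.

Section Algorithm.
Variable A : online_alg R n.

(* While nothing is revealed the run does not depend on the input; [th'] is the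
   last investment of this input-independent trajectory within budget [t]. *)
Lemma outputs_agree_unrevealed k (th : {ffun 'I_n -> R}) h (t : R) :
  \sum_i th i <= t ->
  exists th' : {ffun 'I_n -> R},
    [/\ forall i, th i <= th' i, \sum_i th' i <= t &
      forall s x x' b b' v v', s \notin revealing th' ->
        online_run A x (perm_costs R s) k th h = Some (b, v) -> v < t ->
        online_run A x' (perm_costs R s) k th h = Some (b', v') -> b = b'].
Proof.
elim: k th h => [|k IH] th h le_th_t; first by exists th; split.
case A_h: (A h) => [b0|i d].
  by exists th; split=> // s x x' b b' v v' _ /=; rewrite A_h => -[<- _] _ [<-].
have [d_gt0|d_le0] := ltrP 0 d; last first.
  by exists th; split=> // s x x' b b' v v' _ /=; rewrite A_h ltNge d_le0.
set th1 : {ffun 'I_n -> R} := [ffun j => if j == i then th j + d else th j].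
have le_th1 j : th j <= th1 j by rewrite ffunE; case: eqP => // _; rewrite lerDl ltW.
have [lt_t_th1|le_th1_t] := ltrP t (\sum_j th1 j).
  exists th; split=> // s x x' b b' v v' _ /=; rewrite A_h d_gt0.
  move=> /online_run_ge_sum le_th1_v /(le_lt_trans le_th1_v).
  by rewrite ltNge (ltW lt_t_th1).
have [th' [le_th1' le_th'_t agree]] := IH th1 (rcons h [ffun => None]) le_th1_t.
exists th'; split=> [j||s x x' b b' v v' s_th'] //; first exact: le_trans (le_th1' j).
have s_th1 : s \notin revealing th1.
  by apply: contra s_th'; apply/fintype.subsetP/revealing_monotone.
by rewrite /= A_h d_gt0 !revealed_none //; apply: agree.
Qed.

Lemma zero_error_common_fuel : online_zero_error A ->
  exists K, forall x s, exists v, online_outcome A x (perm_costs R s) K = Some (AND x, v).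
Proof.
move=> zA; have [fuel halts] := choice (fun xs : input n * {perm 'I_n} => zA xs.1 xs.2).
exists (\max_xs fuel xs) => x s; have [v out] := halts (x, s).
by exists v; apply: online_run_monotone out; apply: (leq_bigmax (x, s)).
Qed.

Lemma online_cost_ge0 x s : online_zero_error A -> 0 <= online_cost A x (perm_costs R s).
Proof.
move=> zA; have [k [v out]] := zA x s; rewrite (online_costE out).
by have := online_run_ge_sum out; rewrite big1 // => i _; rewrite ffunE.
Qed.

Lemma card_cheap_le x : (0 < n)%N -> online_zero_error A ->
  #|[set s | online_cost A x (perm_costs R s) < n%:R / 2]|%:R
    <= #|{: {perm 'I_n}}|%:R / 2 :> R.
Proof.
move=> n_gt0 zA; pose t : R := n%:R / 2.
have [x' AND_neq] := exists_AND_neq x n_gt0.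
have [K halts] := zero_error_common_fuel zA.
have [|th [th_ge0 le_th_t agree]] :=
  @outputs_agree_unrevealed K [ffun => 0] [:: [ffun => None]] t.
  by rewrite big1 ?divr_ge0 // => i _; rewrite ffunE.
have th_ge0' i : 0 <= th i by have := th_ge0 i; rewrite ffunE.
(* A cheap run on [x] revealing nothing would also answer [AND x] on [x']. *)
have cheap_revealing : [set s | online_cost A x (perm_costs R s) < t] \subset revealing th.
  apply/fintype.subsetP => s; rewrite inE => cost_lt_t; apply: contraT => s_th.
  have [v out] := halts x s; have [v' out'] := halts x' s.
  rewrite (online_costE out) in cost_lt_t.
  rewrite online_outcome_perm_costs in out; rewrite online_outcome_perm_costs in out'.
  by move: AND_neq; rewrite (agree _ _ _ _ _ _ _ s_th out cost_lt_t out') eqxx.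
apply: le_trans (_ : #|revealing th|%:R <= _); first by rewrite ler_nat subset_leq_card.
apply: le_trans (card_revealing_le n_gt0 th_ge0') _.
apply: le_trans (ler_wpM2l _ le_th_t) _; first by rewrite divr_ge0.
by rewrite /t mulrA divfK // pnatr_eq0 -lt0n.
Qed.

Lemma online_sum_cost_ge x : (0 < n)%N -> online_zero_error A ->
  n%:R / 4 * #|{: {perm 'I_n}}|%:R <= \sum_s online_cost A x (perm_costs R s).
Proof.
move=> n_gt0 zA; set N : R := #|{: {perm 'I_n}}|%:R; pose t : R := n%:R / 2.
set cheap := [set s | online_cost A x (perm_costs R s) < t].
have cost_ge s : (if s \notin cheap then t else 0) <= online_cost A x (perm_costs R s).
  by rewrite inE; case: ltrP => // _; apply: online_cost_ge0.
apply: le_trans (ler_sum _ (fun s _ => cost_ge s)).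
rewrite -big_mkcond sumr_const -[t *+ _]mulr_natr.
have -> : #|[pred s | s \notin cheap]|%:R = N - #|cheap|%:R.
  rewrite /N -(cardsC cheap) natrD addrC addKr.
  by congr _%:R; apply: eq_card => s; rewrite !inE.
have -> : n%:R / 4 * N = t * (N - N / 2) by rewrite /t; field.
by rewrite ler_wpM2l ?divr_ge0 // lerB // card_cheap_le.
Qed.

Lemma online_avg_cost_ge : online_zero_error A -> n%:R / 4 <= online_avg_cost A.
Proof.
move=> zA; apply: avg_xs_ge => x; have [n0|n_gt0] := posnP n.
  have -> : n%:R / 4 = 0 :> R by rewrite n0 mul0r.
  by rewrite mul0r; apply: sumr_ge0 => s _; apply: online_cost_ge0.
exact: online_sum_cost_ge.
Qed.

End Algorithm.
End OnlineLowerBound.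

Lemma online_expected_cost_ge (R : realType) n d (Omega : measurableType d)
    (P : probability Omega R) (A : Omega -> online_alg R n) :
  (forall w, online_zero_error (A w)) ->
  (forall x s, measurable_fun setT (fun w => online_cost (A w) x (perm_costs R s))) ->
  ((n%:R / 4)%:E <= \int[P]_w (online_avg_cost (A w))%:E)%E.
Proof.
move=> zA mA; rewrite -[X in (X <= _)%E]mule1 -(probability_setT P) -integral_cst //.
apply: ge0_le_integral => //.
- by move=> w _; rewrite lee_fin divr_ge0.
- apply/measurable_EFinP; apply: measurable_funM; last exact: measurable_cst.
  by apply: measurable_sum => x; apply: measurable_sum => s; apply: mA.
- by move=> w _; rewrite lee_fin online_avg_cost_ge.
Qed.

Section CheapestFirst.
Variables (R : realType) (n : nat).

(* The [m]-th query is made with a history of size [m] and buys the variable of cost [m]. *)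
Definition cheapest_first : offline_alg R n := fun c h =>
  if [exists i, last [ffun => None] h i == Some false] then @OffHalt n false
  else if [pick i | c i == (size h)%:R] is Some i then OffQuery i else @OffHalt n true.

Section Run.
Variables (x : input n) (s : {perm 'I_n}).

Definition revealed_cheapest m : obs n :=
  [ffun j => if (s j < m)%N then Some (x j) else None].

Definition cheapest_ones j := [forall i, (s i < j)%N ==> x i].

Definition query_cost j : R := if cheapest_ones j then j.+1%:R else 0.

Lemma query_cost_ge0 j : 0 <= query_cost j.
Proof. by rewrite /query_cost; case: ifP. Qed.

Lemma revealed_cheapestS i m : s i = m :> nat ->
  [ffun j => if j == i then Some (x j) else revealed_cheapest m j] = revealed_cheapest m.+1.
Proof.
move=> s_i; apply/ffunP => j; rewrite !ffunE.
case: (j =P i) => [->|/eqP j_i]; first by rewrite s_i ltnSn.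
rewrite ltnS [(s j <= m)%N]leq_eqVlt.
suff /negbTE -> : (s j != m :> nat) by [].
by apply: contraNneq j_i => sj; apply/eqP/(@perm_inj _ s)/ord_inj; rewrite sj s_i.
Qed.

Lemma revealed_cheapest_has_false m :
  [exists i, revealed_cheapest m i == Some false] = ~~ cheapest_ones m.
Proof.
rewrite negb_forall; apply: eq_existsb => i.
by rewrite ffunE negb_imply; case: (s i < m)%N; case: (x i).
Qed.

Lemma cheapest_first_run k m h : (m <= n)%N -> (n - m < k)%N -> size h = m.+1 ->
  last [ffun => None] h = revealed_cheapest m ->
  exists2 v, offline_run cheapest_first x (perm_costs R s) k (revealed_cheapest m)
               (\sum_(j < m) query_cost j) h = Some (AND x, v)
           & v <= \sum_(j < n) query_cost j.
Proof.
elim: k m h => [|k IH] m h le_mn lt_k size_h last_h; first by rewrite ltn0 in lt_k.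
have sum_le : \sum_(j < m) query_cost j <= \sum_(j < n) query_cost j.
  rewrite (big_ord_widen n query_cost le_mn) [X in X <= _]big_mkcond /=.
  by apply: ler_sum => j _; case: ifP => // _; apply: query_cost_ge0.
rewrite /= {1}/cheapest_first last_h revealed_cheapest_has_false size_h.
have [ones|not_ones] := boolP (cheapest_ones m); last first.
  exists (\sum_(j < m) query_cost j) => //; congr (Some (_, _)).
  apply/esym/negbTE; apply: contra not_ones => /forallP all1.
  by apply/forallP => i; rewrite all1 implybT.
rewrite /=; case: pickP => [i /eqP c_i | no_next].
  have s_i : s i = m :> nat by move/eqP: c_i; rewrite eqr_nat eqSS => /eqP.
  have lt_mn : (m < n)%N by rewrite -s_i ltn_ord.
  have -> : \sum_(j < m) query_cost j + perm_costs R s i = \sum_(j < m.+1) query_cost j.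
    by rewrite big_ord_recr /= /query_cost ones c_i.
  rewrite revealed_cheapestS //; apply: IH => //; first by lia.
    by rewrite size_rcons size_h.
  by rewrite last_rcons.
have m_n : m = n.
  apply/eqP; rewrite eqn_leq le_mn leqNgt; apply/negP => lt_mn.
  by have := no_next (s^-1 (Ordinal lt_mn))%g; rewrite /perm_costs permKV eqxx.
subst m; exists (\sum_(j < n) query_cost j) => //; congr (Some (_, _)).
by apply/esym/forallP => i; apply: (implyP (forallP ones i)).
Qed.

Lemma cheapest_first_outcome :
  exists2 v, offline_outcome cheapest_first x (perm_costs R s) n.+1 = Some (AND x, v)
           & v <= \sum_(j < n) query_cost j.
Proof.
have r0 : revealed_cheapest 0 = [ffun => None] by apply/ffunP => j; rewrite !ffunE.
have := @cheapest_first_run n.+1 0 [:: [ffun => None]] (leq0n n).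
by rewrite r0 big_ord0 subn0; apply.
Qed.

End Run.
End CheapestFirst.

Lemma card_cheapest_ones n (s : {perm 'I_n}) j : (j <= n)%N ->
  #|[set x : input n | cheapest_ones x s j]| = (2 ^ (n - j))%N.
Proof.
move=> le_jn; pose D := ~: (s @^-1: [set k : 'I_n | (k < j)%N]).
have -> : #|[set x : input n | cheapest_ones x s j]| = #|pffun_on true D predT|.
  apply: eq_card => x; rewrite inE; apply/forallP/familyP => ones i; have := ones i;
    by rewrite !inE; case: (s i < j)%N; case: (x i).
rewrite card_pffun_on cardsCs finset.setCK card_preimset; last exact: perm_inj.
by rewrite card_ord_ltn card_ord (minn_idPl le_jn) cardT enumT unlock.
Qed.

Lemma sum_weighted_pow2 n :
  (\sum_(j < n) j.+1 * 2 ^ (n - j) + 2 * n + 4 = 2 ^ n.+2)%N.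
Proof.
elim: n => [|n IH]; first by rewrite big_ord0.
rewrite big_ord_recr /= subSn // subnn expn1.
rewrite (eq_bigr (fun j : 'I_n => 2 * (j.+1 * 2 ^ (n - j)))%N); last first.
  by move=> j _; rewrite /= subSn ?(ltnW (ltn_ord j)) // expnS mulnCA.
rewrite -big_distrr /= [(2 ^ n.+3)%N]expnS -IH.
set S := (\sum_(j < n) _)%N; lia.
Qed.

Lemma cheapest_first_sum_cost (R : realType) n (s : {perm 'I_n}) :
  \sum_(x : input n) offline_cost (@cheapest_first R n) x (perm_costs R s) <= 4 * (2 ^ n)%:R.
Proof.
apply: le_trans (_ : \sum_(x : input n) \sum_(j < n) query_cost R x s j <= _).
  apply: ler_sum => x _; have [v out le_v] := cheapest_first_outcome R x s.
  by rewrite (offline_costE out).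
rewrite exchange_big /=.
apply: le_trans (_ : \sum_(j < n) (j.+1 * 2 ^ (n - j))%N%:R <= _).
  apply: ler_sum => j _; rewrite /query_cost -big_mkcond /= sumr_const.
  have := card_cheapest_ones s (ltnW (ltn_ord j)); rewrite cardsE => ->.
  by rewrite natrM mulr_natr.
rewrite -natr_sum -natrM ler_nat (_ : 4 * 2 ^ n = 2 ^ n.+2)%N; last by rewrite !expnS mulnA.
by rewrite -(sum_weighted_pow2 n) -addnA leq_addr.
Qed.

Lemma cheapest_first_zero_error (R : realType) n : offline_zero_error (@cheapest_first R n).
Proof. by move=> x s; have [v out _] := cheapest_first_outcome R x s; exists n.+1, v. Qed.

Lemma cheapest_first_avg_cost_le (R : realType) n :
  offline_avg_cost (@cheapest_first R n) <= 4.
Proof. by apply: avg_xs_le => s; rewrite card_input; apply: cheapest_first_sum_cost. Qed.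

Theorem mainTheorem11 (R : realType) :
  (exists C : R, forall n : nat,
     exists A : offline_alg R n, offline_zero_error A /\ offline_avg_cost A <= C)
  /\
  (exists c : R, 0 < c /\
     forall (n : nat) (d : measure_display) (Omega : measurableType d)
            (P : probability Omega R) (A : Omega -> online_alg R n),
       (forall w, online_zero_error (A w)) ->
       (forall (x : input n) (s : {perm 'I_n}),
          measurable_fun setT (fun w => online_cost (A w) x (perm_costs R s))) ->
       ((c * n%:R)%:E <= \int[P]_w (online_avg_cost (A w))%:E)%E).
Proof.
split.
  exists 4 => n; exists (@cheapest_first R n).
  by split; [apply: cheapest_first_zero_error | apply: cheapest_first_avg_cost_le].
exists (1 / 4); split; first by rewrite divr_gt0.
by move=> n d Omega P A; rewrite mul1r mulrC; apply: online_expected_cost_ge.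
Qed.
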